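(* Let $n>1$ be an integer and let $\pi_2,\ldots,\pi_{n-1}\in[0,1]$ be arbitrary. Consider the Markov chain $X_0,X_1,\ldots$ on the state space $\{1,\ldots,n\}$ with transition probabilities $$p_{1,2}=p_{n,n-1}=1,\qquad p_{i,i+1}=\pi_i,\quad p_{i,i-1}=1-\pi_i \quad (2\le i\le n-1).$$ All other transition probabilities are $0$. For states $i,j$, let $T_{i,j}=\min\{t>0: X_t=j\}$ be the hitting time of $j$ when the chain is started at $X_0=i$. Then $$\mathrm{E}\{T_{1,n}+T_{n,1}\}\ge 2(n-1)^2.$$
   Context: Expectations may be infinite. In that case the inequality holds trivially. *)

From HB Require Import structures.
From mathcomp Require Import all_boot all_order all_algebra.
From mathcomp Require Import all_classical all_reals all_analysis.
Set Implicit Arguments. Unset Strict Implicit. Unset Printing Implicit Defensive.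
Import Order.TTheory GRing.Theory Num.Theory.
Local Open Scope ring_scope.

Section Hitting.
Variables (R : realType) (T : finType) (P : T -> T -> R).

(* taboo i j t y = P(X_t = y and X_s <> j for all 1 <= s <= t | X_0 = i),
   i.e. the sum over all paths i = x_0, x_1, ..., x_t = y avoiding j at
   times 1..t of the products of the transition probabilities. *)
Fixpoint taboo (i j : T) (t : nat) : T -> R :=
  match t with
  | 0 => fun y => (y == i)%:R
  | t'.+1 => fun y => if y == j then 0 else \sum_(x : T) taboo i j t' x * P x y
  end.

Definition hit_law (i j : T) (t : nat) : R :=
  match t with
  | 0 => 0
  | t'.+1 => \sum_(x : T) taboo i j t' x * P x j
  end.

Local Open Scope ereal_scope.

Definition hit_never (i j : T) : \bar R :=
  1 - \sum_(0 <= t <oo) (hit_law i j t)%:E.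

(* E{T_{i,j}} in [0, +oo]: sum_t t P(T = t), plus +oo if P(T = +oo) > 0
   (in mathcomp's ereal, 0 * +oo = 0). *)
Definition expected_hit (i j : T) : \bar R :=
  \sum_(0 <= t <oo) ((t%:R * hit_law i j t)%R)%:E + hit_never i j * +oo.
End Hitting.

(* The chain of the statement on {1,...,n}, encoded on 'I_n: the ordinal x
   stands for the state x+1.  pi k is the probability pi_k (2 <= k <= n-1). *)
Definition bd_kernel (R : realType) (n : nat) (pi : nat -> R) (x y : 'I_n) : R :=
  let i := (val x).+1 in
  let j := (val y).+1 in
  if i == 1%N then (j == 2%N)%:R
  else if i == n then (j == n.-1)%:R
  else if j == i.+1 then pi i
  else if j.+1 == i then 1 - pi i
  else 0.

From HB Require Import structures.
From mathcomp Require Import all_boot all_order all_algebra.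
From mathcomp Require Import all_classical all_reals all_analysis.
From mathcomp Require Import ring lra zify.
Set Implicit Arguments. Unset Strict Implicit.
Import Order.TTheory GRing.Theory Num.Theory.
Local Open Scope ring_scope.

(* If f vanishes at i, is nonnegative and satisfies the drift condition
   Pf <= f + 1 away from j, then f(X_{t /\ T}) - (t /\ T) is a supermartingale
   for T = T_{i,j}, and optional stopping gives E T_{i,j} >= f(j).
   For the birth-death chain, f is built from lower bounds d_k (resp. e_k) on the
   expected time to cross the edge {k, k+1} to the right (resp. to the left).
   When every pi_i lies in (0,1) the exact crossing times are expressed through the
   conductances c_k = prod pi_i / (1 - pi_i): d_k + e_k = 2 C / c_k with
   C = sum_k c_k, so E T_{1,n} + E T_{n,1} = 2 C sum_k 1 / c_k >= 2 (n-1)^2 by the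
   AM-HM inequality.  If some pi_i is 0 (resp. 1) the chain never passes i to the
   right (resp. left), and the corresponding hitting time has infinite mean. *)

Section HittingTime.
Variables (R : realType) (T : finType) (P : T -> T -> R).
Hypothesis P_ge0 : forall x y, 0 <= P x y.
Hypothesis P_sum1 : forall x, \sum_y P x y = 1.
Variables (i j : T).
Hypothesis i_neq_j : i != j.

Local Notation mu := (taboo P i j).
Local Notation h := (hit_law P i j).

Definition survival t := \sum_y mu t y.

Lemma sum_indicator (F : T -> R) a : \sum_y (y == a)%:R * F y = F a.
Proof.
rewrite (bigD1 a) //= eqxx mul1r big1 ?addr0 // => y /negbTE ->.
by rewrite mul0r.
Qed.

Lemma taboo_ge0 t y : 0 <= mu t y.
Proof.
elim: t y => [|t IH] y /=; first by rewrite ler0n.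
by case: ifP => // _; apply: sumr_ge0 => x _; apply: mulr_ge0.
Qed.

Lemma taboo_target t : mu t j = 0.
Proof. by case: t => [|t] /=; rewrite ?eqxx // eq_sym (negbTE i_neq_j). Qed.

Lemma hit_law_ge0 t : 0 <= h t.
Proof.
case: t => [|t] //=.
by apply: sumr_ge0 => x _; apply: mulr_ge0 (taboo_ge0 _ _) (P_ge0 _ _).
Qed.

Lemma taboo_step (w : T -> R) t :
  h t.+1 * w j + \sum_y mu t.+1 y * w y = \sum_x mu t x * \sum_y P x y * w y.
Proof.
under [RHS]eq_bigr do rewrite mulr_sumr.
rewrite exchange_big /= [RHS](bigD1 j) //= [X in _ + X](bigD1 j) //=.
rewrite eqxx mul0r add0r mulr_suml; congr (_ + _).
  by apply: eq_bigr => x _; rewrite mulrA.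
apply: eq_bigr => y /negbTE /= ->; rewrite mulr_suml.
by apply: eq_bigr => x _; rewrite mulrA.
Qed.

Lemma survival_step t : survival t.+1 + h t.+1 = survival t.
Proof.
have := taboo_step (fun=> 1) t.
rewrite mulr1 addrC (eq_bigr (mu t.+1)) => [->|y _]; last by rewrite mulr1.
by apply: eq_bigr => x _; under eq_bigr do rewrite mulr1; rewrite P_sum1 mulr1.
Qed.

Lemma survival0 : survival 0 = 1.
Proof. by rewrite -[RHS](sum_indicator (fun=> 1) i); apply: eq_bigr => y _; rewrite mulr1. Qed.

Lemma survival_ge0 t : 0 <= survival t.
Proof. by apply: sumr_ge0 => y _; apply: taboo_ge0. Qed.

Lemma survival_noninc : {homo survival : s t / (s <= t)%N >-> t <= s}.
Proof.
move=> s t /subnK <-; elim: (t - s)%N => [|k IH] //=.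
rewrite addSn (le_trans _ IH) // -(survival_step (k + s)).
by rewrite lerDl hit_law_ge0.
Qed.

Lemma sum_hit_law N : \sum_(0 <= t < N.+1) h t = 1 - survival N.
Proof.
elim: N => [|N IH]; first by rewrite big_nat1 survival0 subrr.
by rewrite big_nat_recr //= -/(h N.+1) IH -(survival_step N); ring.
Qed.

(* Both sides are E[min(T_{i,j}, N)]. *)
Lemma sum_survival N :
  \sum_(0 <= t < N) survival t = \sum_(0 <= t < N.+1) t%:R * h t + N%:R * survival N.
Proof.
elim: N => [|N IH]; first by rewrite big_nat1 big_geq // !mul0r addr0.
rewrite big_nat_recr //= IH [in RHS]big_nat_recr //= -/(h N.+1).
by rewrite -(survival_step N) -natr1; ring.
Qed.

Lemma sum_survival_le N M : (N <= M)%N ->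
  \sum_(0 <= t < N) survival t <= \sum_(0 <= t < M.+1) t%:R * h t + N%:R * survival M.
Proof.
move=> /subnK <-; elim: (M - N)%N => [|k IH]; first by rewrite sum_survival.
rewrite (le_trans IH) // addSn [in X in _ <= X]big_nat_recr //= -/(h (k + N).+1).
rewrite -(survival_step (k + N)) mulrDr -addrA lerD2l [leLHS]addrC lerD2r.
by rewrite ler_wpM2r ?hit_law_ge0 // ler_nat -addSn leq_addl.
Qed.

Lemma survival_vanishes :
  (\sum_(0 <= t <oo) (h t)%:E = 1)%E -> forall eta, 0 < eta -> exists K, survival K < eta.
Proof.
move=> hit_surely eta eta_gt0; apply: contrapT => /forallNP no_K.
suff : (\sum_(0 <= t <oo) (h t)%:E <= (1 - eta)%:E)%E by rewrite hit_surely lee_fin; lra.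
apply: lime_le; first by apply: is_cvg_nneseries => t _ _; rewrite lee_fin hit_law_ge0.
apply: nearW => -[|N]; rewrite sumEFin lee_fin.
  by rewrite big_geq // subr_ge0 -survival0 leNgt; apply/negP/no_K.
by rewrite sum_hit_law lerB // leNgt; apply/negP/no_K.
Qed.

Variable f : T -> R.
Hypothesis f_start : f i = 0.
Hypothesis f_ge0 : forall y, 0 <= f y.
Hypothesis f_drift : forall x, x != j -> \sum_y P x y * f y <= f x + 1.

Lemma taboo_drift t :
  h t.+1 * f j + \sum_y mu t.+1 y * f y <= \sum_y mu t y * f y + survival t.
Proof.
rewrite taboo_step /survival -big_split /=; apply: ler_sum => x _.
have [->|x_neq_j] := eqVneq x j; first by rewrite taboo_target !mul0r add0r.
by rewrite -[X in _ + X]mulr1 -mulrDr ler_wpM2l ?taboo_ge0 ?f_drift.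
Qed.

(* Optional stopping at time min(T_{i,j}, N). *)
Lemma potential_le_sum_survival N :
  (1 - survival N) * f j + \sum_y mu N y * f y <= \sum_(0 <= t < N) survival t.
Proof.
elim: N => [|N IH].
  by rewrite survival0 subrr mul0r add0r big_geq //= sum_indicator f_start.
have -> : (1 - survival N.+1) * f j + \sum_y mu N.+1 y * f y =
    (1 - survival N) * f j + (h N.+1 * f j + \sum_y mu N.+1 y * f y).
  by rewrite -(survival_step N); ring.
rewrite big_nat_recr //; apply: le_trans (lerD IH (lexx (survival N))).
by have := taboo_drift N; lra.
Qed.

Lemma potential_le_mean (e : R) :
  (forall N, \sum_(0 <= t < N) t%:R * h t <= e) ->
  (forall eta, 0 < eta -> exists K, survival K < eta) -> f j <= e.
Proof.
move=> mean_le vanish; apply/ler_addgt0Pr => del del_gt0.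
have fj_ge0 := f_ge0 j.
have [N sN] : exists N, survival N * (2 * (f j + 1)) < del.
  have [|N] := vanish (del / (2 * (f j + 1))); first by rewrite divr_gt0 //; lra.
  by rewrite ltr_pdivlMr; [exists N | lra].
have N_ge0 := ler0n R N.
have [K sK] : exists K, survival K * (2 * (N%:R + 1)) < del.
  have [|K] := vanish (del / (2 * (N%:R + 1))); first by rewrite divr_gt0 //; lra.
  by rewrite ltr_pdivlMr; [exists K | lra].
have sM : N%:R * survival (maxn N K) <= N%:R * survival K.
  by rewrite ler_wpM2l // survival_noninc // leq_maxr.
have := potential_le_sum_survival N.
have := @sum_survival_le N _ (leq_maxl N K); have := mean_le (maxn N K).+1.
have : 0 <= \sum_y mu N y * f y by apply: sumr_ge0 => y _; rewrite mulr_ge0 ?taboo_ge0.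
have := survival_ge0 N; have := survival_ge0 K.
move: sN sK sM N_ge0; move: (survival N) (survival K) (N%:R) => sn sk n' *; lra.
Qed.

Local Open Scope ereal_scope.

Lemma hit_prob_le1 : \sum_(0 <= t <oo) (h t)%:E <= 1.
Proof.
apply: lime_le; first by apply: is_cvg_nneseries => t _ _; rewrite lee_fin hit_law_ge0.
apply: nearW => -[|N]; rewrite sumEFin lee_fin; first by rewrite big_geq.
by rewrite sum_hit_law gerBl survival_ge0.
Qed.

Lemma potential_le_expected_hit : (f j)%:E <= expected_hit P i j.
Proof.
rewrite /expected_hit /hit_never.
set G := \sum_(0 <= t <oo) (h t)%:E; set E := \sum_(0 <= t <oo) _.
have E_ge_partial N : \sum_(0 <= t < N) ((t%:R * h t)%R)%:E <= E.
  by apply: nneseries_lim_ge => t _ _; rewrite lee_fin mulr_ge0 ?hit_law_ge0.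
have E_ge0 : 0 <= E by rewrite (le_trans _ (E_ge_partial 0%N)) // big_geq.
have G_ge0 : 0 <= G by apply: nneseries_ge0 => t _ _; rewrite lee_fin hit_law_ge0.
have [G1|G_neq1] := eqVneq G 1.
  rewrite G1 subee // mul0e adde0.
  clearbody E; case: E E_ge0 E_ge_partial => [e _ e_ge_partial|_ _|//]; last by rewrite leey.
  rewrite lee_fin; apply: potential_le_mean; last exact: survival_vanishes.
  by move=> N; rewrite -lee_fin -sumEFin.
have [g Gg] : exists g, G = g%:E.
  by exists (fine G); rewrite fineK // ge0_fin_numE // (le_lt_trans hit_prob_le1) ?ltey.
have g_lt1 : (g < 1)%R by rewrite -lte_fin -Gg lt_neqAle G_neq1 hit_prob_le1.
rewrite Gg -EFinB muleC gt0_mulye ?lte_fin ?subr_gt0 //.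
by rewrite addey ?leey // gt_eqF // (lt_le_trans ltNy0 E_ge0).
Qed.

End HittingTime.

Lemma add_ratio_ge2 (R : realFieldType) (x y : R) : 0 < x -> 0 < y -> 2 <= x / y + y / x.
Proof.
move=> x_gt0 y_gt0; have : 0 <= (x - y) ^+ 2 / (x * y) by rewrite divr_ge0 ?sqr_ge0 ?mulr_ge0 ?ltW.
have -> : (x - y) ^+ 2 / (x * y) = x / y + y / x - 2 by field; rewrite !gt_eqF.
by rewrite subr_ge0.
Qed.

Lemma sum_mul_sum_inv_ge (R : realFieldType) (I : finType) (c : I -> R) :
  (forall k, 0 < c k) -> #|I|%:R ^+ 2 <= (\sum_k c k) * \sum_k (c k)^-1.
Proof.
move=> c_gt0.
have prod_eq : (\sum_k c k) * \sum_k (c k)^-1 = \sum_k \sum_l c k / c l.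
  by rewrite mulr_suml; apply: eq_bigr => k _; rewrite mulr_sumr.
have const_sum : \sum_(k : I) \sum_(l : I) (2 : R) = 2 * #|I|%:R ^+ 2.
  by rewrite !sumr_const -mulrnA -(mulr_natr 2 (_ * _)) natrM expr2.
rewrite -(ler_pM2l (_ : 0 < 2)) // -const_sum prod_eq mulr_natl mulr2n.
rewrite [X in _ <= _ + X]exchange_big -big_split /=; apply: ler_sum => k _.
by rewrite -big_split /=; apply: ler_sum => l _; apply: add_ratio_ge2.
Qed.

Section BirthDeath.
Variables (R : realType) (n : nat) (pi : nat -> R).
Hypothesis n_gt1 : (1 < n)%N.
Hypothesis pi01 : forall k : nat, (2 <= k <= n.-1)%N -> 0 <= pi k <= 1.

Local Notation P := (bd_kernel pi).

Lemma sum_ord_indicator (F : nat -> R) a : (a < n)%N ->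
  \sum_(y : 'I_n) (val y == a)%:R * F (val y) = F a.
Proof.
move=> a_lt_n; transitivity (\sum_(y < n | val y == a) F y).
  by rewrite [RHS]big_mkcond; apply: eq_bigr => y _; case: eqP; rewrite ?mul1r ?mul0r.
by rewrite big_ord1_eq a_lt_n.
Qed.

Lemma bd_kernel_interior (x y : 'I_n) : val x != 0%N -> val x != n.-1 ->
  P x y = (val y == (val x).+1)%:R * pi (val x).+1 +
          (val y == (val x).-1)%:R * (1 - pi (val x).+1).
Proof.
case: x y => [a a_lt] [b b_lt] /= a_neq0 a_neq_n; rewrite /bd_kernel /=.
have -> : (a.+1 == 1)%N = false by apply/eqP; lia.
have -> : (a.+1 == n) = false by apply/eqP; lia.
rewrite !eqSS; have [->|b_neq] := eqVneq b a.+1.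
  have -> : (a.+1 == a.-1) = false by apply/eqP; lia.
  by rewrite mul1r mul0r addr0.
have [b_eq|b_neq'] := eqVneq b.+1 a.
  by rewrite -b_eq /= eqxx mul0r mul1r add0r.
have -> : (b == a.-1) = false by apply/eqP; lia.
by rewrite !mul0r addr0.
Qed.

Lemma bd_kernel_mean (F : nat -> R) (x : 'I_n) :
  \sum_y P x y * F (val y) =
  if val x == 0%N then F 1%N
  else if val x == n.-1 then F n.-2
  else pi (val x).+1 * F (val x).+1 + (1 - pi (val x).+1) * F (val x).-1.
Proof.
have x_lt : (val x < n)%N := ltn_ord x.
have [x0|x_neq0] := eqVneq (val x) 0%N.
  by rewrite -(@sum_ord_indicator F 1 n_gt1); apply: eq_bigr => y _; rewrite /bd_kernel x0.
have [xn|x_neq_n] := eqVneq (val x) n.-1.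
  rewrite -(@sum_ord_indicator F n.-2); last by lia.
  apply: eq_bigr => y _; rewrite /bd_kernel xn.
  have -> : (n.-1.+1 == 1)%N = false by apply/eqP; lia.
  have -> : n.-1.+1 = n by lia.
  have -> : ((val y).+1 == n.-1) = (val y == n.-2) by apply/eqP/eqP; lia.
  by rewrite eqxx.
under eq_bigr do rewrite bd_kernel_interior // mulrDl -!mulrA.
move: x_neq0 x_neq_n x_lt; case: x => a /= *.
rewrite big_split /= (sum_ord_indicator (fun k => pi a.+1 * F k)); last by lia.
by rewrite (sum_ord_indicator (fun k => (1 - pi a.+1) * F k)) //; lia.
Qed.

Lemma bd_kernel_sum1 (x : 'I_n) : \sum_y P x y = 1.
Proof.
have := bd_kernel_mean (fun=> 1) x; under eq_bigr do rewrite mulr1.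
by move=> ->; rewrite !mulr1 subrKC !if_same.
Qed.

Lemma bd_kernel_ge0 (x y : 'I_n) : 0 <= P x y.
Proof.
have x_lt : (val x < n)%N := ltn_ord x.
have [x0|x_neq0] := eqVneq (val x) 0%N; first by rewrite /bd_kernel x0 ler0n.
have [xn|x_neq_n] := eqVneq (val x) n.-1.
  rewrite /bd_kernel xn; have -> : (n.-1.+1 == 1)%N = false by apply/eqP; lia.
  have -> : n.-1.+1 = n by lia.
  by rewrite eqxx ler0n.
have /andP[pi_ge0 pi_le1] : 0 <= pi (val x).+1 <= 1 by apply: pi01; lia.
rewrite bd_kernel_interior //.
by apply: addr_ge0; apply: mulr_ge0; rewrite ?ler0n ?subr_ge0.
Qed.

(* States are ordinals here: d k (resp. e k) is meant to bound from below the
   expected time to go from k to k+1 (resp. from k+1 to k), and the drift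
   inequalities are the first-step equations for these times. *)
Definition right_crossing_subsolution (d : nat -> R) :=
  [/\ forall k, (k < n.-1)%N -> 0 <= d k, d 0%N <= 1 &
      forall a, (a.+2 < n)%N -> pi a.+2 * d a.+1 - (1 - pi a.+2) * d a <= 1].

Definition left_crossing_subsolution (e : nat -> R) :=
  [/\ forall k, (k < n.-1)%N -> 0 <= e k, e n.-2 <= 1 &
      forall a, (a.+2 < n)%N -> (1 - pi a.+2) * e a - pi a.+2 * e a.+1 <= 1].

Lemma zero_crossing_subsolution :
  right_crossing_subsolution (fun=> 0) /\ left_crossing_subsolution (fun=> 0).
Proof. by split; split => // *; rewrite !mulr0 subrr. Qed.

(* pi a.+2 = 0: the chain never steps right from the ordinal a+1. *)
Lemma blocked_right_crossing a M : (a.+2 < n)%N -> pi a.+2 = 0 -> 0 <= M ->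
  right_crossing_subsolution (fun k => (k == a.+1)%:R * M).
Proof.
move=> a_lt pi0 M_ge0; split=> [k _||b b_lt]; first by rewrite mulr_ge0 ?ler0n.
  by rewrite mul0r ler01.
have /andP[_ pi_le1] : 0 <= pi b.+2 <= 1 by apply: pi01; lia.
have [->|b_neq] := eqVneq b a.
  by rewrite pi0 (ltn_eqF (ltnSn a)) !mul0r mulr0 subrr ler01.
rewrite eqSS (negbTE b_neq) mul0r mulr0 sub0r (le_trans _ ler01) // oppr_le0.
by rewrite mulr_ge0 ?mulr_ge0 ?ler0n ?subr_ge0.
Qed.

Lemma blocked_left_crossing a M : (a.+2 < n)%N -> pi a.+2 = 1 -> 0 <= M ->
  left_crossing_subsolution (fun k => (k == a)%:R * M).
Proof.
move=> a_lt pi1 M_ge0; split=> [k _||b b_lt]; first by rewrite mulr_ge0 ?ler0n.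
  have -> : (n.-2 == a) = false by apply/eqP; lia.
  by rewrite mul0r ler01.
have /andP[pi_ge0 _] : 0 <= pi b.+2 <= 1 by apply: pi01; lia.
have [->|b_neq] := eqVneq b a.
  by rewrite pi1 subrr (gtn_eqF (ltnSn a)) !mul0r mulr0 subrr ler01.
rewrite mul0r mulr0 sub0r (le_trans _ ler01) // oppr_le0.
by rewrite mulr_ge0 ?mulr_ge0 ?ler0n.
Qed.

Section Endpoints.
Variables (s1 sn : 'I_n).
Hypotheses (s1_val : val s1 = 0%N) (sn_val : val sn = n.-1).

Lemma s1_neq_sn : s1 != sn.
Proof. by apply/eqP => /(congr1 val); rewrite s1_val sn_val; lia. Qed.

Lemma right_crossing_le_expected_hit d : right_crossing_subsolution d ->
  ((\sum_(0 <= k < n.-1) d k)%:E <= expected_hit P s1 sn)%E.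
Proof.
move=> [d_ge0 d0 d_drift].
pose f (y : 'I_n) := \sum_(0 <= k < val y) d k.
have -> : \sum_(0 <= k < n.-1) d k = f sn by rewrite /f sn_val.
apply: potential_le_expected_hit; [exact: bd_kernel_ge0 | exact: bd_kernel_sum1 |
  exact: s1_neq_sn | by rewrite /f s1_val big_geq | | ].
  move=> y; rewrite /f big_nat_cond; apply: sumr_ge0 => k /andP[/andP[_ k_lt] _].
  by apply: d_ge0; rewrite (leq_trans k_lt) // -ltnS (ltn_predK n_gt1) ltn_ord.
move=> x x_neq_sn; rewrite (bd_kernel_mean (fun k => \sum_(0 <= i < k) d i)) /f.
have x_neq : val x != n.-1.
  by apply: contra x_neq_sn => /eqP x_eq; apply/eqP/val_inj; rewrite x_eq sn_val.
rewrite (negbTE x_neq); have x_lt : (val x < n)%N := ltn_ord x.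
case: (val x) x_neq x_lt => [|b] x_neq x_lt /=; first by rewrite big_nat1 big_geq // add0r.
have := d_drift b (ltac:(lia)); rewrite !big_nat_recr //=.
by move: (pi b.+2) (d b) (d b.+1) (\sum_(0 <= i < b) d i) => p u v w; lra.
Qed.

Lemma left_crossing_le_expected_hit e : left_crossing_subsolution e ->
  ((\sum_(0 <= k < n.-1) e k)%:E <= expected_hit P sn s1)%E.
Proof.
move=> [e_ge0 e_last e_drift].
pose g (y : 'I_n) := \sum_(val y <= k < n.-1) e k.
have -> : \sum_(0 <= k < n.-1) e k = g s1 by rewrite /g s1_val.
apply: potential_le_expected_hit; [exact: bd_kernel_ge0 | exact: bd_kernel_sum1 |
  by rewrite eq_sym s1_neq_sn | by rewrite /g sn_val big_geq | | ].
  move=> y; rewrite /g big_nat_cond.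
  by apply: sumr_ge0 => k /andP[/andP[_ k_lt] _]; apply: e_ge0.
move=> x x_neq_s1; rewrite (bd_kernel_mean (fun k => \sum_(k <= i < n.-1) e i)) /g.
have x_neq : val x != 0%N.
  by apply: contra x_neq_s1 => /eqP x_eq; apply/eqP/val_inj; rewrite x_eq s1_val.
rewrite (negbTE x_neq); have x_lt : (val x < n)%N := ltn_ord x.
have [x_eq|x_neq_n] := eqVneq (val x) n.-1.
  rewrite x_eq (big_ltn (m := n.-2)); last by lia.
  have -> : n.-2.+1 = n.-1 by lia.
  by rewrite !big_geq // addr0 add0r.
case: (val x) x_neq x_neq_n x_lt => [|b] // _ x_neq_n x_lt /=.
have := e_drift b (ltac:(lia)); rewrite (big_ltn (m := b)); last by lia.
rewrite (big_ltn (m := b.+1)); last by lia.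
by move: (pi b.+2) (e b) (e b.+1) (\sum_(b.+2 <= i < n.-1) e i) => p u v w; lra.
Qed.

End Endpoints.

End BirthDeath.

Section Conductance.
Variables (R : realType) (n : nat) (pi : nat -> R).
Hypothesis n_gt1 : (1 < n)%N.
Hypothesis pi_inner : forall a, (a.+2 < n)%N -> 0 < pi a.+2 < 1.

(* Detailed balance: (1 - pi a.+2) * c a.+1 = pi a.+2 * c a. *)
Fixpoint conductance k : R :=
  if k is k'.+1 then conductance k' * pi k.+1 / (1 - pi k.+1) else 1.

Local Notation c := conductance.

Lemma conductance_gt0 k : (k < n.-1)%N -> 0 < c k.
Proof.
elim: k => [|k IH] k_lt /=; first exact: ltr01.
have /andP[pi_gt0 pi_lt1] := @pi_inner k (ltac:(lia)).
by rewrite divr_gt0 ?mulr_gt0 ?subr_gt0 // IH //; lia.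
Qed.

(* The exact expected crossing times of the edge {k, k+1}. *)
Definition right_crossing k := (2 * \sum_(0 <= i < k) c i + c k) / c k.
Definition left_crossing k := (2 * \sum_(k.+1 <= i < n.-1) c i + c k) / c k.

Lemma right_crossing_drift a : (a.+2 < n)%N ->
  pi a.+2 * right_crossing a.+1 - (1 - pi a.+2) * right_crossing a = 1.
Proof.
move=> a_lt; have /andP[pi_gt0 pi_lt1] := pi_inner a_lt.
have c_gt0 : 0 < c a by apply: conductance_gt0; lia.
rewrite /right_crossing big_nat_recr //=.
move: pi_gt0 pi_lt1 c_gt0; move: (pi a.+2) (c a) (\sum_(0 <= i < a) c i) => p x S *.
by field; rewrite !gt_eqF ?subr_gt0 ?mulr_gt0 ?divr_gt0 ?subr_gt0.
Qed.

Lemma left_crossing_drift a : (a.+2 < n)%N ->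
  (1 - pi a.+2) * left_crossing a - pi a.+2 * left_crossing a.+1 = 1.
Proof.
move=> a_lt; have /andP[pi_gt0 pi_lt1] := pi_inner a_lt.
have c_gt0 : 0 < c a by apply: conductance_gt0; lia.
rewrite /left_crossing (big_ltn (m := a.+1)) /=; last by lia.
move: pi_gt0 pi_lt1 c_gt0; move: (pi a.+2) (c a) (\sum_(a.+2 <= i < n.-1) c i) => p x S *.
by field; rewrite !gt_eqF ?subr_gt0 ?mulr_gt0 ?divr_gt0 ?subr_gt0.
Qed.

Lemma partial_conductance_ge0 m k : (k <= n.-1)%N -> 0 <= \sum_(m <= i < k) c i.
Proof.
move=> k_le; rewrite big_nat_cond; apply: sumr_ge0 => i /andP[/andP[_ i_lt] _].
by apply/ltW/conductance_gt0; lia.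
Qed.

Lemma right_crossing_solution : right_crossing_subsolution n pi right_crossing.
Proof.
split=> [k k_lt||a a_lt]; last by rewrite right_crossing_drift.
  have c_gt0 := conductance_gt0 k_lt.
  by rewrite divr_ge0 ?addr_ge0 ?mulr_ge0 ?partial_conductance_ge0 ?ltW //; lia.
by rewrite /right_crossing big_geq //= mulr0 add0r divr1.
Qed.

Lemma left_crossing_solution : left_crossing_subsolution n pi left_crossing.
Proof.
split=> [k k_lt||a a_lt]; last by rewrite left_crossing_drift.
  have c_gt0 := conductance_gt0 k_lt.
  by rewrite divr_ge0 ?addr_ge0 ?mulr_ge0 ?partial_conductance_ge0 ?ltW.
have c_gt0 : 0 < c n.-2 by apply: conductance_gt0; lia.
rewrite /left_crossing big_geq; last by lia.
by rewrite mulr0 add0r divff ?gt_eqF.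
Qed.

Lemma crossing_sum k : (k < n.-1)%N ->
  right_crossing k + left_crossing k = 2 * (\sum_(0 <= i < n.-1) c i) / c k.
Proof.
move=> k_lt; have c_gt0 := conductance_gt0 k_lt.
rewrite (big_cat_nat (n := k)) //=; last by lia.
rewrite (big_ltn k_lt) /right_crossing /left_crossing.
by field; rewrite gt_eqF.
Qed.

Lemma sum_crossing_ge :
  2 * (n.-1)%:R ^+ 2 <= \sum_(0 <= k < n.-1) (right_crossing k + left_crossing k).
Proof.
rewrite (eq_big_nat _ _ (F2 := fun k => 2 * (\sum_(0 <= i < n.-1) c i) * (c k)^-1)).
  rewrite -mulr_sumr -mulrA ler_pM2l // !big_mkord.
  by rewrite -[X in X%:R]card_ord; apply: sum_mul_sum_inv_ge => k; apply: conductance_gt0.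
by move=> k /andP[_ k_lt]; rewrite crossing_sum.
Qed.

End Conductance.

Lemma exists_crossing_subsolutions (R : realType) (n : nat) (pi : nat -> R) :
  (1 < n)%N -> (forall k, (2 <= k <= n.-1)%N -> 0 <= pi k <= 1) ->
  exists d e, [/\ right_crossing_subsolution n pi d, left_crossing_subsolution n pi e &
    2 * (n.-1)%:R ^+ 2 <= \sum_(0 <= k < n.-1) (d k + e k)].
Proof.
move=> n_gt1 pi01; set M : R := 2 * (n.-1)%:R ^+ 2.
have M_ge0 : 0 <= M by rewrite mulr_ge0 ?exprn_ge0.
have [zero_d zero_e] := zero_crossing_subsolution n pi.
have sum_spike a : (a < n.-1)%N -> \sum_(0 <= k < n.-1) (k == a)%:R * M = M.
  by move=> a_lt; rewrite big_mkord (@sum_ord_indicator _ _ (fun=> M)).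
have [[a [a_lt pi0]]|no_zero] := pselect (exists a, (a.+2 < n)%N /\ pi a.+2 = 0).
  exists (fun k => (k == a.+1)%:R * M), (fun=> 0); split => //.
    exact: blocked_right_crossing n_gt1 pi01 _ _ a_lt pi0 M_ge0.
  by under eq_bigr do rewrite addr0; rewrite sum_spike //; lia.
have [[a [a_lt pi1]]|no_one] := pselect (exists a, (a.+2 < n)%N /\ pi a.+2 = 1).
  exists (fun=> 0), (fun k => (k == a)%:R * M); split => //.
    exact: blocked_left_crossing n_gt1 pi01 _ _ a_lt pi1 M_ge0.
  by under eq_bigr do rewrite add0r; rewrite sum_spike //; lia.
have pi_inner a : (a.+2 < n)%N -> 0 < pi a.+2 < 1.
  move=> a_lt; have /andP[pi_ge0 pi_le1] : 0 <= pi a.+2 <= 1 by apply: pi01; lia.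
  rewrite !lt_neqAle pi_ge0 pi_le1 !andbT; apply/andP; split; apply/eqP => pi_eq.
    by apply: no_zero; exists a.
  by apply: no_one; exists a.
exists (right_crossing pi), (left_crossing n pi); split.
- exact: right_crossing_solution n_gt1 pi_inner.
- exact: left_crossing_solution n_gt1 pi_inner.
- exact: sum_crossing_ge n_gt1 pi_inner.
Qed.

Theorem lemma1 (R : realType) (n : nat) (hn : (1 < n)%N) (pi : nat -> R)
    (hpi : forall k : nat, (2 <= k <= n.-1)%N -> 0 <= pi k <= 1)
    (s1 sn : 'I_n) (h1 : val s1 = 0%N) (hn' : val sn = n.-1) :
  ((2 * (n.-1) ^ 2)%N%:R%:E <=
     expected_hit (bd_kernel pi) s1 sn + expected_hit (bd_kernel pi) sn s1)%E.
Proof.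
have [d [e [d_sub e_sub de_ge]]] := exists_crossing_subsolutions hn hpi.
apply: le_trans (leeD (right_crossing_le_expected_hit hn hpi h1 hn' d_sub)
                      (left_crossing_le_expected_hit hn hpi h1 hn' e_sub)).
by rewrite -EFinD lee_fin -big_split natrM natrX.
Qed.
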